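(* Let $R$ be a Bezout domain satisfying the Dubrovin–Komarnytsky (D-K) condition. If $a,b\in R$ satisfy $RaR=R$ and $RbR=R$, then $RabR=R$.
   Context: All rings are associative with nonzero identity. A Bezout domain is a domain in which every finitely generated right ideal and every finitely generated left ideal is principal. For $x\in R$, $RxR$ denotes the two-sided ideal generated by $x$. A nonzero element $a$ is invariant if $aR=Ra$. $R$ satisfies the Dubrovin condition if for every $a\in R$ there is $a_*\in R$ with $RaR=a_*R=Ra_*$. A domain $R$ satisfies the Komarnytsky condition if whenever $a$ is invariant and $a=bc$ with $b,c\in R$, both $b$ and $c$ are invariant. The D-K condition means that both the Dubrovin and the Komarnytsky conditions hold. *)

From HB Require Import structures.
From mathcomp Require Import all_boot all_order all_algebra.
Set Implicit Arguments. Unset Strict Implicit. Unset Printing Implicit Defensive.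
Import GRing.Theory.
Local Open Scope ring_scope.

Definition is_domain (R : nzRingType) : Prop :=
  forall x y : R, x * y = 0 -> x = 0 \/ y = 0.

Definition in_right_ideal (R : nzRingType) (n : nat) (g : 'I_n -> R) (z : R) : Prop :=
  exists c : 'I_n -> R, z = \sum_(i < n) g i * c i.

Definition in_left_ideal (R : nzRingType) (n : nat) (g : 'I_n -> R) (z : R) : Prop :=
  exists c : 'I_n -> R, z = \sum_(i < n) c i * g i.

Definition in_rprinc (R : nzRingType) (d z : R) : Prop := exists t, z = d * t.
Definition in_lprinc (R : nzRingType) (d z : R) : Prop := exists t, z = t * d.

Definition in_RxR (R : nzRingType) (x z : R) : Prop :=
  exists (n : nat) (r s : 'I_n -> R), z = \sum_(i < n) r i * x * s i.

Definition is_bezout_domain (R : nzRingType) : Prop :=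
  is_domain R /\
  (forall (n : nat) (g : 'I_n -> R), exists d : R,
      forall z, in_right_ideal g z <-> in_rprinc d z) /\
  (forall (n : nat) (g : 'I_n -> R), exists d : R,
      forall z, in_left_ideal g z <-> in_lprinc d z).

Definition invariant (R : nzRingType) (a : R) : Prop :=
  a <> 0 /\ (forall z, in_rprinc a z <-> in_lprinc a z).

Definition dubrovin (R : nzRingType) : Prop :=
  forall a : R, exists a_star : R,
    forall z, (in_RxR a z <-> in_rprinc a_star z) /\
              (in_RxR a z <-> in_lprinc a_star z).

Definition komarnytsky (R : nzRingType) : Prop :=
  forall a b c : R, invariant a -> a = b * c -> invariant b /\ invariant c.

Definition DK_condition (R : nzRingType) : Prop := dubrovin R /\ komarnytsky R.

From Pilot Require Import Defs.
From mathcomp Require Import all_boot all_order all_algebra.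
Local Open Scope ring_scope.
Import GRing.Theory.
Set Implicit Arguments. Unset Strict Implicit.

(* Let [c] be the invariant generator of [RabR] given by the Dubrovin condition.
   By left Bezout, [Ra + Rc = Rd], and [d] is invariant by the Komarnytsky
   condition since it right-divides [c]; then [RaR] lies in [Rd], so [d] is a
   unit and [1 = x a + y c].  Multiplying by [b] on the right and using
   [ab, cb \in cR = Rc] gives [b \in Rc], hence [RbR = R] lies in [Rc] and
   [RabR = Rc = R]. *)

Section PrincipalIdeals.
Variable R : nzRingType.
Implicit Types a c d x z : R.

Lemma in_lprinc0 d : in_lprinc d 0.
Proof. by exists 0; rewrite mul0r. Qed.

Lemma in_lprincD d z1 z2 : in_lprinc d z1 -> in_lprinc d z2 -> in_lprinc d (z1 + z2).
Proof. by move=> [t1 ->] [t2 ->]; exists (t1 + t2); rewrite mulrDl. Qed.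

Lemma in_lprincMl d r z : in_lprinc d z -> in_lprinc d (r * z).
Proof. by move=> [t ->]; exists (r * t); rewrite mulrA. Qed.

Lemma in_RxR_refl x : in_RxR x x.
Proof. by exists 1%N, (fun _ => 1), (fun _ => 1); rewrite big_ord1 mul1r mulr1. Qed.

Lemma in_RxR_lprinc d x :
  (forall z, in_rprinc d z -> in_lprinc d z) ->
  in_lprinc d x -> forall z, in_RxR x z -> in_lprinc d z.
Proof.
move=> dR_sub_Rd [t ->] z [n [r [s ->]]].
apply: (big_ind (in_lprinc d)) => [|? ?|i _]; [exact: in_lprinc0|exact: in_lprincD|].
have [w dsw] : in_lprinc d (d * s i) by apply: dR_sub_Rd; exists (s i).
by rewrite -!mulrA dsw mulrA; apply: in_lprincMl; exists w.
Qed.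

Lemma full_RxR_neq0 x : (forall z, in_RxR x z) -> x <> 0.
Proof.
move=> hx x0; have [n [r [s]]] := hx 1.
rewrite big1 => [|i _]; last by rewrite x0 mulr0 mul0r.
by move/eqP; rewrite oner_eq0.
Qed.

(* [Defs.invariant] is qualified because MathComp's [invariant] shadows it. *)
Lemma dubrovin_generator_invariant x c :
  (forall z, (in_RxR x z <-> in_rprinc c z) /\ (in_RxR x z <-> in_lprinc c z)) ->
  x <> 0 -> Defs.invariant c.
Proof.
move=> hc x_neq0; split => [c0|z].
  have [t ht] := (proj1 (hc x)).1 (in_RxR_refl x).
  by apply: x_neq0; rewrite ht c0 mul0r.
by split=> hz; [apply/(hc z).2/(hc z).1 | apply/(hc z).1/(hc z).2].
Qed.

Lemma left_bezout_pair :
  (forall (n : nat) (g : 'I_n -> R), exists d : R,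
      forall z, in_left_ideal g z <-> in_lprinc d z) ->
  forall a c, exists d, [/\ in_lprinc d a, in_lprinc d c &
    forall z, in_lprinc d z -> exists x y, z = x * a + y * c].
Proof.
move=> hL a c; pose g (i : 'I_2) := if val i == 0%N then a else c.
have [d hd] := hL 2%N g.
have sum2 (f : 'I_2 -> R) : \sum_(i < 2) f i * g i = f ord0 * a + f ord_max * c.
  rewrite !big_ord_recl big_ord0 addr0.
  by have -> : lift ord0 ord0 = ord_max :> 'I_2 by apply: val_inj.
exists d; split.
- by apply/hd; exists (fun i => if val i == 0%N then 1 else 0); rewrite sum2 mul1r mul0r addr0.
- by apply/hd; exists (fun i => if val i == 0%N then 0 else 1); rewrite sum2 mul1r mul0r add0r.
- by move=> z /hd [f ->]; exists (f ord0), (f ord_max); rewrite sum2.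
Qed.

End PrincipalIdeals.

Lemma comaximal_with_invariant (R : nzRingType) (hB : is_bezout_domain R)
  (hK : komarnytsky R) (a c : R) :
  Defs.invariant c -> (forall z, in_RxR a z) -> exists x y, 1 = x * a + y * c.
Proof.
move=> cinv ha; have [_ [_ hL]] := hB.
have [d [da [u cud] dcomb]] := left_bezout_pair hL a c.
have [_ [_ dinv]] := hK c u d cinv cud.
by apply: dcomb; apply: (in_RxR_lprinc (fun z => (dinv z).1) da).
Qed.

Theorem proposition3p4 (R : nzRingType) (hB : is_bezout_domain R) (hDK : DK_condition R)
  (a b : R) (ha : forall z : R, in_RxR a z) (hb : forall z : R, in_RxR b z) :
  forall z : R, in_RxR (a * b) z.
Proof.
have [[hdom _] [hD hK]] := (hB, hDK).
have ab_neq0 : a * b <> 0.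
  by move/hdom=> [] /full_RxR_neq0; [apply | apply].
have [c hc] := hD (a * b).
have cinv := dubrovin_generator_invariant hc ab_neq0.
have [x [y one_comb]] := comaximal_with_invariant hB hK cinv ha.
have [t ab_ct] := (hc _).1.1 (in_RxR_refl (a * b)).
have b_in_Rc : in_lprinc c b.
  rewrite -[b]mul1r one_comb mulrDl -!mulrA ab_ct.
  apply: in_lprincD; first by apply: in_lprincMl; apply/cinv.2; exists t.
  by apply: in_lprincMl; apply/cinv.2; exists b.
have [e one_ec] := in_RxR_lprinc (fun z => (cinv.2 z).1) b_in_Rc (hb 1).
by move=> z; apply/(hc z).2; exists (z * e); rewrite -mulrA -one_ec mulr1.
Qed.
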